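(* Let $(K,v)$ be a gdr field with $\operatorname{char}K=0$ and $\operatorname{char}Kv=p>0$, and let $(vK)_p$ denote the smallest convex subgroup of $vK$ containing $vp$. 1) Let $a\in\mathcal{O}_K$ with $va=0$. Then for every $c\in\mathcal{O}_K$ with $0<v(a-c^p)\in(vK)_p$ there is $d\in\mathcal{O}_K$ such that $v(a-d^p)=vp+\frac1p v(a-c^p)$. 2) Let $a\in\mathcal{O}_K$ with $va\in(vK)_p$ and $\operatorname{dist}(a,K^p)<va+\frac{p}{p-1}vp$. Then $$va+vp<\operatorname{dist}(a,K^p)=va+\frac{p}{p-1}vp+H^-$$ where $H$ is a convex subgroup of $\widetilde{vK}$ not containing $vp$.
   Context: Gdr field: $(K,v)$ satisfies (DRvr): the map $x\mapsto x^p$ on $\mathcal{O}_{\hat K}/p\mathcal{O}_{\hat K}$ is surjective ($\hat K$ the completion), and (DRvp): $vp$ is not the smallest positive element of $vK$. $K^p=\{c^p\mid c\in K\}$, $v(a-K^p)=\{v(a-c^p)\mid c\in K\}$. Cuts in the divisible hull $\widetilde{vK}$: $\Lambda=(\Lambda^L,\Lambda^R)$, $\Lambda^L$ initial segment; ordered by inclusion of lower sets; an element $s$ is identified with the cut $(\{t\le s\},\{t>s\})$; $\alpha+\Lambda=(\alpha+\Lambda^L,\alpha+\Lambda^R)$; for a convex subgroup $H$, $H^-$ is the cut with lower set $\{t\mid t<H\}$. $\operatorname{dist}(a,K^p)$ is the cut whose lower set is the smallest initial segment of $\widetilde{vK}$ containing $v(a-K^p)\cap vK$. *)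

(* A valuation on a field K is given as a map  v : K -> G  into an ordered
   divisible abelian group, realised as the additive group of a
   realFieldType G (only +, -, <= and division by positive integers of G
   are ever used).  The value 0 has no meaningful valuation: v 0 is junk and
   every occurrence of "v x" in the statement comes with "x != 0"
   (v 0 = +oo in the paper). *)
From HB Require Import structures.
From mathcomp Require Import all_boot all_order all_algebra.
Set Implicit Arguments. Unset Strict Implicit. Unset Printing Implicit Defensive.
Import Order.TTheory GRing.Theory Num.Theory.
Local Open Scope ring_scope.

Section Valued.
Variables (K : fieldType) (G : realFieldType) (v : K -> G).

Definition valuation : Prop :=
  (forall x y, x != 0 -> y != 0 -> v (x * y) = v x + v y) /\
  (forall x y, x != 0 -> y != 0 -> x + y != 0 -> Num.min (v x) (v y) <= v (x + y)).

Definition vring (x : K) : Prop := x = 0 \/ 0 <= v x.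

Definition vgroup (g : G) : Prop := exists x, x != 0 /\ v x = g.

Definition vhull (g : G) : Prop := exists n : nat, (0 < n)%N /\ vgroup (g *+ n).

Definition convex_subgroup (A H : G -> Prop) : Prop :=
  (forall g, H g -> A g) /\ H 0 /\
  (forall g h, H g -> H h -> H (g - h)) /\
  (forall g h t, H g -> H h -> A t -> g <= t -> t <= h -> H t).

Definition vKp (p : nat) (g : G) : Prop :=
  vgroup g /\
  forall H, convex_subgroup vgroup H -> H (v p%:R) -> H g.

(* Cuts in the divisible hull are represented by their lower sets. *)
Definition is_cut (L : G -> Prop) : Prop :=
  (forall t, L t -> vhull t) /\
  (forall s t, L t -> vhull s -> s <= t -> L s).

Definition cut_le (L1 L2 : G -> Prop) : Prop := forall t, L1 t -> L2 t.
Definition cut_lt (L1 L2 : G -> Prop) : Prop := cut_le L1 L2 /\ ~ cut_le L2 L1.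
Definition cut_eq (L1 L2 : G -> Prop) : Prop := forall t, L1 t <-> L2 t.

(* the element s viewed as the cut ({t <= s}, {t > s}) *)
Definition cut_pt (s : G) (t : G) : Prop := vhull t /\ t <= s.

Definition cut_shift (alpha : G) (L : G -> Prop) (t : G) : Prop :=
  exists u, L u /\ t = alpha + u.

Definition cut_minus (H : G -> Prop) (t : G) : Prop :=
  vhull t /\ forall h, H h -> t < h.

(* dist(a, K^p): smallest initial segment of the hull containing
   v(a - K^p) \cap vK  (the value +oo, i.e. a = c^p, is excluded) *)
Definition dist (p : nat) (a : K) (t : G) : Prop :=
  vhull t /\ exists c : K, a - c ^+ p != 0 /\ t <= v (a - c ^+ p).

(* gdr field.  (DRvr) is stated for O_K/pO_K; since vp > 0 this ring is
   canonically isomorphic to O_{\hat K}/pO_{\hat K}. *)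
Definition DRvr (p : nat) : Prop :=
  forall x, vring x -> exists y z, vring y /\ vring z /\ x - y ^+ p = p%:R * z.

Definition DRvp (p : nat) : Prop :=
  ~ (vgroup (v p%:R) /\ 0 < v p%:R /\
     forall g, vgroup g -> 0 < g -> v p%:R <= g).

Definition gdr (p : nat) : Prop := DRvr p /\ DRvp p.

End Valued.

(* (DRvr) says that every unit is a p-th power modulo p.  Hence every value
   in [0, vp) is p-divisible in vK, (DRvp) splits vp into two such values, and
   so all of (vK)_p = {t | |t| <= n vp for some n} is p-divisible.
   For part 1 write v(a - c^p) = p vπ; (DRvr) applied to (a - c^p)/π^p yields e
   with ve = vπ and v(a - c^p - e^p) > vp + vπ, and the binomial expansion
   (c + e)^p = c^p + e^p + p c^(p-1) e + p e^2 W gives v(a - (c + e)^p) = vp + vπ.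
   For part 2 rescale a to a unit: part 1 turns an approximation c with
   v(a - c^p) = va + p r into one with v(a - d^p) = va + vp + r.  This divides
   the defect va + β - v(a - c^p), β = p/(p-1) vp, by p, so the elements
   bounded in absolute value by all defects form a convex subgroup H not
   containing vp, and dist(a, K^p) = va + β + H^-. *)

From Stdlib Require Import Classical.
From HB Require Import structures.
From mathcomp Require Import all_boot all_order all_algebra.
From mathcomp Require Import ring lra.
Import Order.TTheory GRing.Theory Num.Theory.
Set Implicit Arguments. Unset Strict Implicit. Unset Printing Implicit Defensive.
Local Open Scope ring_scope.

Section ValuedField.
Variables (K : fieldType) (G : realFieldType) (v : K -> G).
Hypothesis hv : valuation v.

Lemma valuationM x y : x != 0 -> y != 0 -> v (x * y) = v x + v y.
Proof. exact: hv.1. Qed.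

Lemma valuation1 : v 1 = 0.
Proof. have := valuationM (oner_neq0 K) (oner_neq0 K); rewrite mulr1 => h; lra. Qed.

Lemma valuationN x : v (- x) = v x.
Proof.
have [->|x0] := eqVneq x 0; first by rewrite oppr0.
have N1 : (-1 : K) != 0 by rewrite oppr_eq0 oner_neq0.
have vN1 : v (-1) = 0.
  by have := valuationM N1 N1; rewrite mulrNN mulr1 valuation1 => h; lra.
by rewrite -mulN1r valuationM // vN1 add0r.
Qed.

Lemma valuationV x : x != 0 -> v x^-1 = - v x.
Proof.
by move=> x0; have := valuationM x0 (invr_neq0 x0); rewrite mulfV // valuation1 => h; lra.
Qed.

Lemma valuationX x n : x != 0 -> v (x ^+ n) = v x *+ n.
Proof.
move=> x0; elim: n => [|n IH]; first by rewrite expr0 valuation1 mulr0n.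
by rewrite exprS valuationM ?expf_neq0 // IH mulrS.
Qed.

Definition val_ge (x : K) (g : G) := x = 0 \/ g <= v x.
Definition val_gt (x : K) (g : G) := x = 0 \/ g < v x.

Lemma val_geD x y g : val_ge x g -> val_ge y g -> val_ge (x + y) g.
Proof.
case=> [->|hx]; first by rewrite add0r.
case=> [->|hy]; first by rewrite addr0; right.
have [->|s0] := eqVneq (x + y) 0; first by left.
have [->|x0] := eqVneq x 0; first by rewrite add0r; right.
have [->|y0] := eqVneq y 0; first by rewrite addr0; right.
by right; apply: le_trans (hv.2 _ _ x0 y0 s0); rewrite le_min hx hy.
Qed.

Lemma val_gtD x y g : val_gt x g -> val_gt y g -> val_gt (x + y) g.
Proof.
case=> [->|hx]; first by rewrite add0r.
case=> [->|hy]; first by rewrite addr0; right.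
have [->|s0] := eqVneq (x + y) 0; first by left.
have [->|x0] := eqVneq x 0; first by rewrite add0r; right.
have [->|y0] := eqVneq y 0; first by rewrite addr0; right.
by right; apply: lt_le_trans (hv.2 _ _ x0 y0 s0); rewrite lt_min hx hy.
Qed.

Lemma val_gtN x g : val_gt x g -> val_gt (- x) g.
Proof. by case=> [->|h]; [left; rewrite oppr0 | right; rewrite valuationN]. Qed.

Lemma val_geM x y g h : val_ge x g -> val_ge y h -> val_ge (x * y) (g + h).
Proof.
case=> [->|hx]; first by rewrite mul0r; left.
case=> [->|hy]; first by rewrite mulr0; left.
have [->|x0] := eqVneq x 0; first by rewrite mul0r; left.
have [->|y0] := eqVneq y 0; first by rewrite mulr0; left.
by right; rewrite valuationM //; lra.
Qed.

Lemma val_ge_gt x g h : val_ge x g -> h < g -> val_gt x h.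
Proof. by case=> [->|hx] hg; [left | right; lra]. Qed.

Lemma val_geX x n g : val_ge x g -> val_ge (x ^+ n) (g *+ n).
Proof.
move=> h; elim: n => [|n IH]; first by right; rewrite expr0 valuation1 mulr0n.
by rewrite exprS mulrS; apply: val_geM.
Qed.

Lemma val_ge_nat n : val_ge n%:R 0.
Proof.
elim: n => [|n IH]; first by left.
by rewrite mulrS; apply: val_geD => //; right; rewrite valuation1.
Qed.

Lemma val_ge_sum (I : Type) (r : seq I) (P : pred I) (F : I -> K) g :
  (forall i, P i -> val_ge (F i) g) -> val_ge (\sum_(i <- r | P i) F i) g.
Proof.
move=> h; apply: (big_ind (fun x => val_ge x g)); [by left | | by []].
by move=> x y; apply: val_geD.
Qed.

Lemma val_add_small x y : x != 0 -> val_gt y (v x) -> x + y != 0 /\ v (x + y) = v x.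
Proof.
move=> x0; case=> [->|hy]; first by rewrite addr0.
have [->|y0] := eqVneq y 0; first by rewrite addr0.
have s0 : x + y != 0.
  apply: contraTneq hy => /eqP; rewrite addr_eq0 => /eqP ->.
  by rewrite valuationN ltxx.
have h1 := hv.2 _ _ x0 y0 s0.
have yN0 : - y != 0 by rewrite oppr_eq0.
have h2 := hv.2 _ _ s0 yN0; rewrite addrK valuationN in h2.
split=> //; move: h1 (h2 x0); rewrite !ge_min.
by case/orP => h1 /orP [] h3; lra.
Qed.

Lemma vgroup_val x : x != 0 -> vgroup v (v x).
Proof. by exists x. Qed.

Lemma vgroup0 : vgroup v 0.
Proof. by rewrite -valuation1; apply/vgroup_val/oner_neq0. Qed.

Lemma vgroupB g h : vgroup v g -> vgroup v h -> vgroup v (g - h).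
Proof.
case=> x [x0 <-] [y [y0 <-]]; exists (x / y).
by rewrite mulf_neq0 ?invr_neq0 // valuationM ?invr_neq0 // valuationV.
Qed.

Lemma vgroupD g h : vgroup v g -> vgroup v h -> vgroup v (g + h).
Proof.
by move=> hg hh; have := vgroupB hg (vgroupB vgroup0 hh); rewrite sub0r opprK.
Qed.

Lemma vgroupMn g n : vgroup v g -> vgroup v (g *+ n).
Proof.
move=> hg; elim: n => [|n IH]; first by rewrite mulr0n; apply: vgroup0.
by rewrite mulrS; apply: vgroupD.
Qed.

Lemma vhull_vgroup g : vgroup v g -> vhull v g.
Proof. by exists 1%N. Qed.

Lemma vhullB g h : vhull v g -> vhull v h -> vhull v (g - h).
Proof.
case=> n [n0 hn] [m [m0 hm]]; exists (n * m)%N; split; first by rewrite muln_gt0 n0.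
rewrite mulrnBl; apply: vgroupB; first by rewrite mulrnA; apply: vgroupMn.
by rewrite mulnC mulrnA; apply: vgroupMn.
Qed.

Lemma vhullD g h : vhull v g -> vhull v h -> vhull v (g + h).
Proof.
move=> hg hh; have := vhullB hg (vhullB (vhull_vgroup vgroup0) hh).
by rewrite sub0r opprK.
Qed.

End ValuedField.

Lemma dist_lt_cut_pt (K : fieldType) (G : realFieldType) (v : K -> G) p a s :
  cut_lt (dist v p a) (cut_pt v s) ->
  forall c, a - c ^+ p != 0 -> v (a - c ^+ p) < s.
Proof.
case=> _ hnle c hc; rewrite ltNge; apply: contra_notN hnle => hs t [ht ts].
by split=> //; exists c; split=> //; apply: le_trans hs.
Qed.

Definition binom_tail (R : comPzRingType) (p : nat) (c e : R) :=
  \sum_(i < p.-2) ('C(p, i.+2) %/ p)%:R * c ^+ (p - i.+2) * e ^+ i.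

Lemma exprD_prime (R : comPzRingType) (p : nat) (c e : R) : prime p ->
  (c + e) ^+ p =
  c ^+ p + e ^+ p + p%:R * c ^+ p.-1 * e + p%:R * e ^+ 2 * binom_tail p c e.
Proof.
case: p => [|[|q]] // hp.
rewrite exprDn big_ord_recl big_ord_recl big_ord_recr /= /binom_tail mulr_sumr.
have -> : \sum_(i < q) c ^+ (q.+2 - bump 0 (bump 0 i)) * e ^+ bump 0 (bump 0 i)
            *+ 'C(q.+2, bump 0 (bump 0 i)) =
          \sum_(i < q) q.+2%:R * e ^+ 2 *
            (('C(q.+2, i.+2) %/ q.+2)%:R * c ^+ (q.+2 - i.+2) * e ^+ i).
  apply: eq_bigr => i _; rewrite /bump /= !add1n.
  have hd : (q.+2 %| 'C(q.+2, i.+2))%N by apply: prime_dvd_bin; rewrite //= !ltnS.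
  by rewrite -mulr_natr -{1}(divnK hd) natrM !exprS; ring.
rewrite subn0 subnn bin0 bin1 binn subn1 /= expr0 expr1 mulr1 mul1r.
by rewrite /bump /= !add1n -mulr_natr; ring.
Qed.

Section NatMulPrime.
Variables (G : realFieldType) (p : nat).
Hypothesis hp : prime p.

Lemma mulrn_prime_ge (s : G) : 0 <= s -> s + s <= s *+ p.
Proof.
move=> s0; have := prime_gt1 hp; case: p => [|[|q]] // _.
rewrite !mulrS; have : 0 <= s *+ q by apply: mulrn_wge0.
lra.
Qed.

Lemma mulrn_primeI (s t : G) : s *+ p = t *+ p -> s = t.
Proof.
have p0 : (p%:R : G) != 0 by rewrite pnatr_eq0 -lt0n prime_gt0.
by move=> e; apply: (mulIf p0); rewrite !mulr_natr.
Qed.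

Lemma prime_ratio_mul (w : G) :
  (p%:R - 1) * (p%:R / (p.-1)%:R * w) = p%:R * w.
Proof.
have hQ : ((p.-1)%:R : G) = p%:R - 1 by rewrite -subn1 natrB // prime_gt0.
have hQ0 : ((p.-1)%:R : G) != 0.
  by rewrite pnatr_eq0 -lt0n -ltnS prednK ?prime_gt1 ?prime_gt0.
by rewrite -hQ; field.
Qed.

Lemma prime_ratio_le (w : G) : 0 <= w -> p%:R / (p.-1)%:R * w <= w + w.
Proof.
move=> w0; set beta := _ * w.
have p2 : (2 : G) <= p%:R by rewrite ler_nat prime_gt1.
have e : (p%:R - 1) * (w + w - beta) = (p%:R - 2) * w.
  by rewrite mulrBr prime_ratio_mul; ring.
have : 0 <= (p%:R - 1) * (w + w - beta) by rewrite e mulr_ge0 // subr_ge0.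
by rewrite pmulr_rge0 ?subr_gt0 ?(lt_le_trans _ p2) ?ltr1n // subr_ge0.
Qed.

End NatMulPrime.

Section MixedCharacteristic.
Variables (K : fieldType) (G : realFieldType) (v : K -> G) (p : nat).
Hypotheses (hv : valuation v) (hp : prime p) (hw : 0 < v (p%:R : K)) (hpK : p%:R != 0 :> K).
(* [lra] ignores section hypotheses, hence the local copies [w_gt0] of [hw]. *)
Local Notation w := (v p%:R).
Local Notation val_ge := (val_ge v).
Local Notation val_gt := (val_gt v).

Definition vp_bounded (t : G) := exists n, - (w *+ n) <= t /\ t <= w *+ n.

Lemma vKpP t : vKp v p t <-> vgroup v t /\ vp_bounded t.
Proof.
split=> [[ht hmin] | [ht [n [tl tu]]]].
  split=> //.
  have w_gt0 := hw.
  have wn0 n : 0 <= w *+ n by apply/mulrn_wge0/ltW.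
  pose H g := vgroup v g /\ vp_bounded g.
  suff [] : H t by [].
  apply: hmin; last by split; [exact: vgroup_val | exists 1%N; rewrite mulr1n; split; lra].
  split; first by move=> g [].
  split; first by split; [exact: vgroup0 | exists 0%N; rewrite mulr0n; split; lra].
  split=> [g h [hg [n [g1 g2]]] [hh [m [h1 h2]]] |
           g h s [_ [n [g1 g2]]] [_ [m [h1 h2]]] hs gs sh].
    split; first exact: vgroupB.
    by exists (n + m)%N; rewrite mulrnDr; split; lra.
  split=> //; exists (n + m)%N; rewrite mulrnDr.
  by have := wn0 n; have := wn0 m; split; lra.
split=> // H [_ [H0 [HB Hconv]]] Hw.
have HN g : H g -> H (- g) by move=> hg; have := HB _ _ H0 hg; rewrite sub0r.
have Hn : H (w *+ n).
  elim: (n) => [|m IH]; first by rewrite mulr0n.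
  by rewrite mulrS; have := HB _ _ Hw (HN _ IH); rewrite opprK.
exact: Hconv (HN _ Hn) Hn ht tl tu.
Qed.

Definition p_divisible (t : G) := exists2 y : K, y != 0 & v y *+ p = t.

Lemma p_divisible0 : p_divisible 0.
Proof. by exists 1; rewrite ?oner_neq0 // valuation1 // mul0rn. Qed.

Lemma p_divisibleD s t : p_divisible s -> p_divisible t -> p_divisible (s + t).
Proof.
case=> y y0 <- [z z0 <-]; exists (y * z); first by rewrite mulf_neq0.
by rewrite valuationM // mulrnDl.
Qed.

Lemma p_divisibleN t : p_divisible t -> p_divisible (- t).
Proof.
case=> y y0 <-; exists y^-1; first by rewrite invr_neq0.
by rewrite valuationV // mulNrn.
Qed.

Lemma rescale_to_unit x : x != 0 -> p_divisible (v x) ->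
  exists pi u, [/\ pi != 0, v pi *+ p = v x, u != 0, v u = 0 & x = pi ^+ p * u].
Proof.
move=> x0 [pi pi0 vpi]; have pp0 : pi ^+ p != 0 by rewrite expf_neq0.
exists pi, (x / pi ^+ p); split=> //; first by rewrite mulf_neq0 ?invr_neq0.
  by rewrite valuationM ?invr_neq0 // valuationV // valuationX // vpi subrr.
by rewrite mulrC divfK.
Qed.

Lemma val_sub_expr_rescale x pi u c : pi != 0 -> x = pi ^+ p * u -> u - c ^+ p != 0 ->
  x - (pi * c) ^+ p != 0 /\ v (x - (pi * c) ^+ p) = v pi *+ p + v (u - c ^+ p).
Proof.
move=> pi0 -> uc0; have pp0 : pi ^+ p != 0 by rewrite expf_neq0.
by rewrite exprMn -mulrBr mulf_neq0 // valuationM // valuationX.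
Qed.

Lemma val_ge_binom_tail c e : vring v c -> vring v e -> val_ge (binom_tail p c e) 0.
Proof.
have geM0 x y : val_ge x 0 -> val_ge y 0 -> val_ge (x * y) 0.
  by move=> hx hy; have := val_geM hv hx hy; rewrite addr0.
have geX0 x n : val_ge x 0 -> val_ge (x ^+ n) 0.
  by move=> hx; have := val_geX hv n hx; rewrite mul0rn.
move=> hc he; apply: (val_ge_sum hv) => i _.
by apply: (geM0); [apply: (geM0); [exact: (val_ge_nat hv) | exact: geX0] | exact: geX0].
Qed.

Lemma val_sub_exprD a c e : c != 0 -> v c = 0 -> e != 0 -> 0 < v e ->
  val_gt (a - c ^+ p - e ^+ p) (w + v e) ->
  a - (c + e) ^+ p != 0 /\ v (a - (c + e) ^+ p) = w + v e.
Proof.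
move=> c0 vc e0 ve rest.
rewrite exprD_prime //; set W := binom_tail p c e.
have -> : a - (c ^+ p + e ^+ p + p%:R * c ^+ p.-1 * e + p%:R * e ^+ 2 * W) =
          - (p%:R * c ^+ p.-1 * e) + (a - c ^+ p - e ^+ p - p%:R * e ^+ 2 * W).
  by ring.
have lead0 : - (p%:R * c ^+ p.-1 * e) != 0 by rewrite oppr_eq0 !mulf_neq0 // expf_neq0.
have vlead : v (- (p%:R * c ^+ p.-1 * e)) = w + v e.
  rewrite valuationN // !valuationM ?mulf_neq0 ?expf_neq0 //.
  by rewrite valuationX // vc mul0rn addr0.
have tail : val_gt (- (p%:R * e ^+ 2 * W)) (w + v e).
  apply: val_gtN => //; apply: (val_ge_gt (g := w + v e *+ 2 + 0)).
    apply: val_geM => //; last by apply: val_ge_binom_tail; right; rewrite ?vc // ltW.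
    by apply: val_geM => //; right; rewrite ?valuationX.
  by rewrite mulr2n; lra.
rewrite -vlead; apply: val_add_small => //; rewrite vlead; exact: val_gtD.
Qed.

Section Gdr.
Hypothesis hdr : DRvr v p.

Lemma DRvr_root x : x != 0 -> 0 <= v x -> v x < w ->
  exists y z, [/\ y != 0, v y *+ p = v x, vring v z & x - y ^+ p = p%:R * z].
Proof.
move=> x0 x_ge0 x_lt.
have [y [z [_ [zr e]]]] := hdr (or_intror x_ge0 : vring v x).
have small : val_gt (- (p%:R * z)) (v x).
  apply: val_gtN => //; have [->|z0] := eqVneq z 0; first by rewrite mulr0; left.
  case: zr => [ez|hz]; first by rewrite ez eqxx in z0.
  by right; rewrite valuationM //; lra.
have ey : x - p%:R * z = y ^+ p by rewrite -e opprB addrC subrK.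
have [yp0 vyp] := val_add_small hv x0 small; rewrite ey in yp0 vyp.
have y0 : y != 0 by apply: contraNneq yp0 => ->; rewrite expr0n gtn_eqF ?prime_gt0.
by exists y, z; split; rewrite -?(valuationX hv).
Qed.

Lemma p_divisible_small t : vgroup v t -> 0 <= t -> t < w -> p_divisible t.
Proof.
case=> x [x0 <-] t0 tw.
by have [y [z [y0 vy _ _]]] := DRvr_root x0 t0 tw; exists y.
Qed.

Hypothesis hdp : DRvp v p.

Lemma p_divisible_vp : p_divisible w.
Proof.
apply: NNPP => ndiv; apply: hdp; split; first exact: vgroup_val.
split=> // g hg g0; rewrite leNgt; apply/negP => gw; apply: ndiv.
have -> : w = g + (w - g) by rewrite addrC subrK.
apply: p_divisibleD; first exact: p_divisible_small (ltW g0) gw.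
by apply: p_divisible_small; [apply: vgroupB => //; exact: vgroup_val | lra | lra].
Qed.

Lemma p_divisible_vKp t : vKp v p t -> p_divisible t.
Proof.
case/vKpP => ht [n [tl tu]].
suff nonneg s : vgroup v s -> 0 <= s -> s <= w *+ n -> p_divisible s.
  have [t0|t0] := leP 0 t; first exact: nonneg.
  rewrite -[t]opprK; apply/p_divisibleN/nonneg; try lra.
  by rewrite -sub0r; apply: vgroupB => //; apply: vgroup0.
elim: n {tl tu} s => [|n IH] s hs s0 sn.
  have -> : s = 0 by rewrite mulr0n in sn; lra.
  exact: p_divisible0.
have [sw|ws] := ltP s w; first exact: p_divisible_small.
have -> : s = w + (s - w) by rewrite addrC subrK.
apply: p_divisibleD p_divisible_vp (IH _ _ _ _); try (rewrite mulrS in sn; lra).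
by apply: vgroupB => //; exact: vgroup_val.
Qed.

Lemma pth_power_approx b pi : pi != 0 -> 0 < v pi -> b != 0 -> v b = v pi *+ p ->
  exists2 e, e != 0 /\ v e = v pi & val_gt (b - e ^+ p) (w + v pi).
Proof.
move=> pi0 pi_gt0 b0 vb; have pp0 : pi ^+ p != 0 by rewrite expf_neq0.
set u := b / pi ^+ p; have eb : b = pi ^+ p * u by rewrite mulrC divfK.
have u0 : u != 0 by rewrite mulf_neq0 ?invr_neq0.
have vu : v u = 0 by rewrite valuationM ?invr_neq0 // valuationV // valuationX // vb subrr.
have [y [z [y0 vy zr e]]] : exists y z, [/\ y != 0, v y *+ p = v u, vring v z
                                        & u - y ^+ p = p%:R * z].
  by apply: DRvr_root => //; rewrite vu // hw.
have {}vy : v y = 0 by apply: (mulrn_primeI hp); rewrite vy vu mul0rn.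
exists (pi * y); first by rewrite mulf_neq0 // valuationM // vy addr0.
rewrite {1}eb exprMn -mulrBr e.
apply: val_ge_gt (val_geM hv (or_intror (lexx _)) (val_geM hv (or_intror (lexx _)) zr)) _.
by rewrite valuationX // addr0; have := mulrn_prime_ge hp (ltW pi_gt0); lra.
Qed.

Lemma improve_approx a c : a != 0 -> v a = 0 -> a - c ^+ p != 0 ->
  0 < v (a - c ^+ p) -> vKp v p (v (a - c ^+ p)) ->
  exists d, vring v d /\ a - d ^+ p != 0 /\ v (a - d ^+ p) = w + v (a - c ^+ p) / p%:R.
Proof.
move=> a0 va b0 b_gt0 /p_divisible_vKp [pi pi0 vpi].
have -> : v (a - c ^+ p) / p%:R = v pi.
  by rewrite -vpi -[v pi *+ p]mulr_natr mulfK // pnatr_eq0 -lt0n prime_gt0.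
have pi_gt0 : 0 < v pi by move: b_gt0; rewrite -vpi pmulrn_lgt0 ?prime_gt0.
have c0 : c != 0.
  by apply: contraTneq b_gt0 => ->; rewrite expr0n gtn_eqF ?prime_gt0 // subr0 va ltxx.
have vc : v c = 0.
  have : val_gt (- (a - c ^+ p)) (v a) by apply: val_gtN => //; right; rewrite va.
  case/(val_add_small hv a0) => _; rewrite opprB addrC subrK valuationX // va => h.
  by apply: (mulrn_primeI hp); rewrite h mul0rn.
have [e [e0 ve] rest] := pth_power_approx pi0 pi_gt0 b0 (esym vpi).
have [d0 vd] : a - (c + e) ^+ p != 0 /\ v (a - (c + e) ^+ p) = w + v e.
  by apply: val_sub_exprD; rewrite ?ve.
exists (c + e); split; last by rewrite vd ve.
by apply: val_geD => //; right; rewrite ?vc // ve ltW.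
Qed.

Section Distance.
Variable a : K.
Hypotheses (a0 : a != 0) (hKa : vKp v p (v a)).
Local Notation beta := (p%:R / (p.-1)%:R * w).
Hypothesis hdist : forall c, a - c ^+ p != 0 -> v (a - c ^+ p) < v a + beta.

Lemma improve_dist_approx c : a - c ^+ p != 0 -> v a < v (a - c ^+ p) ->
  exists d, a - d ^+ p != 0 /\ v (a - d ^+ p) = v a + w + (v (a - c ^+ p) - v a) / p%:R.
Proof.
move=> ac0 hc; have beta_le := prime_ratio_le hp (ltW hw).
have [pi [u [pi0 vpi u0 vu ea]]] := rescale_to_unit a0 (p_divisible_vKp hKa).
have ec : c = pi * (c / pi) by rewrite mulrC divfK.
set c' := c / pi in ec.
have uc0 : u - c' ^+ p != 0.
  by apply: contraNneq ac0 => uc0; rewrite ec ea exprMn -mulrBr uc0 mulr0.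
have [_ vc'] := val_sub_expr_rescale pi0 ea uc0; rewrite -ec vpi in vc'.
have := hdist ac0; rewrite vc' in hc * => hc'.
have vKc : vKp v p (v (u - c' ^+ p)).
  by apply/vKpP; split; [exact: vgroup_val | exists 2%N; rewrite mulr2n; split; lra].
have uc_gt0 : 0 < v (u - c' ^+ p) by lra.
have [d [_ [d0 vd]]] := improve_approx u0 vu uc0 uc_gt0 vKc.
have [ad0 vad] := val_sub_expr_rescale pi0 ea d0.
by exists (pi * d); split=> //; rewrite vad vpi vd; ring.
Qed.

Lemma approx_ge_vp : exists c, a - c ^+ p != 0 /\ v a + w <= v (a - c ^+ p).
Proof.
have [w_gt0 beta_le] := (hw, prime_ratio_le hp (ltW hw)).
have [pi [u [pi0 vpi u0 vu ea]]] := rescale_to_unit a0 (p_divisible_vKp hKa).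
have [y [z [y0 vy zr e]]] : exists y z, [/\ y != 0, v y *+ p = v u, vring v z
                                        & u - y ^+ p = p%:R * z].
  by apply: DRvr_root => //; rewrite vu.
have {}vy : v y = 0 by apply: (mulrn_primeI hp); rewrite vy vu mul0rn.
have [uy0 | uy] := eqVneq (u - y ^+ p) 0.
  (* a = (pi y)^p, but then pi (y + p^2) approximates a beyond va + beta. *)
  set E := (p%:R : K) ^+ 2; have E0 : E != 0 by rewrite expf_neq0.
  have vE : v E = w *+ 2 by rewrite valuationX.
  have w2_ge0 : 0 <= w *+ 2 by rewrite mulrn_wge0 // ltW.
  have := mulrn_prime_ge hp w2_ge0; rewrite mulr2n => wp.
  have [yE0 vyE] : u - (y + E) ^+ p != 0 /\ v (u - (y + E) ^+ p) = w + v E.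
    apply: val_sub_exprD; rewrite ?vE ?mulr2n //; first lra.
    by rewrite uy0 sub0r; apply: val_gtN => //; right; rewrite valuationX // vE mulr2n; lra.
  have [f0 vf] := val_sub_expr_rescale pi0 ea yE0.
  by have := hdist f0; rewrite vf vpi vyE vE mulr2n; lra.
have [f0 vf] := val_sub_expr_rescale pi0 ea uy.
have z0 : z != 0 by apply: contraNneq uy => z0; rewrite e z0 mulr0.
exists (pi * y); split=> //; rewrite vf vpi e valuationM //.
by case: zr => [/eqP | z_ge0]; [rewrite (negbTE z0) | lra].
Qed.

Lemma approx_gt_vp : exists c, a - c ^+ p != 0 /\ v a + w < v (a - c ^+ p).
Proof.
have w_gt0 := hw; have [c [c0 hc]] := approx_ge_vp.
have hlt : v a < v (a - c ^+ p) by lra.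
have [d [d0 vd]] := improve_dist_approx c0 hlt.
exists d; split=> //; rewrite vd.
have : 0 < (v (a - c ^+ p) - v a) / p%:R by rewrite divr_gt0 ?ltr0n ?prime_gt0 //; lra.
lra.
Qed.

Definition defect c := v a + beta - v (a - c ^+ p).

Lemma defect_gt0 c : a - c ^+ p != 0 -> 0 < defect c.
Proof. by move/hdist; rewrite subr_gt0. Qed.

(* With v(a - c^p) = va + p r, the improved d has defect d = beta - vp - r,
   and p * defect d = defect c because (p - 1) beta = p vp. *)
Lemma defect_contract c : a - c ^+ p != 0 -> v a < v (a - c ^+ p) ->
  exists d, [/\ a - d ^+ p != 0, v a < v (a - d ^+ p) & defect d + defect d <= defect c].
Proof.
move=> c0 hc; have [d [d0 vd]] := improve_dist_approx c0 hc.
set r := (v (a - c ^+ p) - v a) / p%:R in vd.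
have p_gt0 : (0 : G) < p%:R by rewrite ltr0n prime_gt0.
have er : v (a - c ^+ p) = v a + p%:R * r by rewrite /r mulrC divfK ?gt_eqF //; ring.
have r_gt0 : 0 < r by rewrite /r divr_gt0 //; lra.
have w_gt0 := hw.
exists d; split=> //; first by lra.
have key : defect c = p%:R * defect d.
  by rewrite /defect vd er; have := prime_ratio_mul hp w; lra.
by rewrite key mulr_natl; have := mulrn_prime_ge hp (ltW (defect_gt0 d0)).
Qed.

Definition dist_group h := vhull v h /\ forall c, a - c ^+ p != 0 ->
  v a < v (a - c ^+ p) -> - defect c < h /\ h < defect c.

Lemma dist_group0 : dist_group 0.
Proof.
split; first exact/vhull_vgroup/vgroup0.
by move=> c c0 _; have := defect_gt0 c0; split; lra.
Qed.

Lemma dist_group_convex : convex_subgroup (vhull v) dist_group.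
Proof.
split; first by move=> g [].
split; first exact: dist_group0.
split=> [g h [hg Hg] [hh Hh] | g h t [_ Hg] [_ Hh] ht gt th]; last first.
  by split=> // c c0 hc; have := Hg c c0 hc; have := Hh c c0 hc; split; lra.
split; first exact: vhullB.
move=> c c0 hc; have [d [d0 hd le]] := defect_contract c0 hc.
by have := Hg d d0 hd; have := Hh d d0 hd; split; lra.
Qed.

Lemma vp_notin_dist_group : ~ dist_group w.
Proof.
have [w_gt0 beta_le] := (hw, prime_ratio_le hp (ltW hw)).
case=> _ Hw; have [c [c0 hc]] := approx_ge_vp.
have hlt : v a < v (a - c ^+ p) by lra.
by have := Hw c c0 hlt; rewrite /defect; lra.
Qed.

Lemma vhull_dist_bound : vhull v (v a + beta).
Proof.
exists p.-1; split; first by rewrite -subn1 subn_gt0 prime_gt1.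
rewrite mulrnDl; apply: vgroupD => //; first exact/vgroupMn/vgroup_val.
have -> : beta *+ p.-1 = w *+ p.
  rewrite -[beta *+ _]mulr_natl -[w *+ p]mulr_natl -(prime_ratio_mul hp w).
  by congr (_ * _); rewrite -subn1 natrB ?prime_gt0.
exact/vgroupMn/vgroup_val.
Qed.

Lemma dist_eq_shift :
  cut_eq (dist v p a) (cut_shift (v a + beta) (cut_minus v dist_group)).
Proof.
have w_gt0 := hw.
move=> t; split.
  case=> ht [c [c0 hle]]; exists (t - (v a + beta)); split; last by rewrite addrC subrK.
  split; first exact: vhullB vhull_dist_bound.
  move=> h [_ Hh]; have [hc|hc] := ltP (v a) (v (a - c ^+ p)).
    by have := Hh c c0 hc; rewrite /defect; lra.
  have [c1 [c10 hc1]] := approx_ge_vp.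
  have hlt : v a < v (a - c1 ^+ p) by lra.
  by have := Hh c1 c10 hlt; rewrite /defect; lra.
case=> u [[hu Hu] ->]; split; first exact: vhullD vhull_dist_bound hu.
apply: NNPP => nle; have u_lt0 := Hu 0 dist_group0.
suff /Hu : dist_group u by lra.
split=> // c c0 hc; have := defect_gt0 c0.
have : v (a - c ^+ p) < v a + beta + u.
  by rewrite ltNge; apply/negP => hle; apply: nle; exists c.
by rewrite /defect; split; lra.
Qed.

Lemma dist_gt_vp : cut_lt (cut_pt v (v a + w)) (dist v p a).
Proof.
have [d [d0 hd]] := approx_gt_vp.
split=> [t [ht tle] | le]; first by split=> //; exists d; split=> //; lra.
have : dist v p a (v (a - d ^+ p)).
  by split; [exact/vhull_vgroup/vgroup_val | exists d].
by case/le => _; lra.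
Qed.

End Distance.
End Gdr.
End MixedCharacteristic.

Theorem proposition6p6 (K : fieldType) (G : realFieldType) (v : K -> G) (p : nat) :
  valuation v ->
  [pchar K] =i pred0 ->
  prime p -> 0 < v p%:R ->
  gdr v p ->
  (* part 1 *)
  (forall a : K, vring v a -> a != 0 -> v a = 0 ->
     forall c : K, vring v c -> a - c ^+ p != 0 ->
       0 < v (a - c ^+ p) -> vKp v p (v (a - c ^+ p)) ->
       exists d : K, vring v d /\ a - d ^+ p != 0 /\
         v (a - d ^+ p) = v p%:R + v (a - c ^+ p) / p%:R) /\
  (* part 2 *)
  (forall a : K, vring v a -> a != 0 -> vKp v p (v a) ->
     cut_lt (dist v p a) (cut_pt v (v a + (p%:R / (p.-1)%:R) * v p%:R)) ->
     cut_lt (cut_pt v (v a + v p%:R)) (dist v p a) /\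
     exists H : G -> Prop,
       convex_subgroup (vhull v) H /\ ~ H (v p%:R) /\
       cut_eq (dist v p a)
              (cut_shift (v a + (p%:R / (p.-1)%:R) * v p%:R) (cut_minus v H))).
Proof.
move=> hv hchar hp hw [hdr hdp].
have hpK : p%:R != 0 :> K by have := hchar p; rewrite !inE hp /= => ->.
split=> [a _ a0 va c _ | a _ a0 hKa /dist_lt_cut_pt hdist].
  by apply: improve_approx.
split; first by apply: dist_gt_vp.
exists (dist_group v p a); split; first by apply: dist_group_convex.
by split; [apply: vp_notin_dist_group | apply: dist_eq_shift].
Qed.
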